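(* Consider $K$ patches in an environment alternating periodically $e_1,e_2,e_1,e_2,\dots$ (state $e_1$ at even generations). Assume $\mathbb E(N_i(w)\log^+N_i(w))<\infty$ and $m_i(w)>0$ for all $i$ and $w\in\{e_1,e_2\}$, and that $D$ is irreducible and aperiodic. Let $\rho>0$ be such that $\rho^2$ is the maximal (Perron) eigenvalue of the two-generation mean matrix $A^{(2)}$ with entries $a_{ij}=\sum_{k=1}^K m_i(e_1)d_{ik}m_k(e_2)d_{kj}$. Then $$ 2\log\rho=\max\{R(f)-I(f): f\in\mathcal F_{\mathcal E}\}. $$
   Context: Model with environment: at each generation, every individual in patch $i$ independently produces $N_i(w)$ offspring, $w$ being the current environment state, with mean $m_i(w)$; each offspring independently moves from $i$ to $j$ with probability $d_{ij}$ ($D$ stochastic, environment-independent). $(X_n)$ is the Markov chain with transition matrix $D$. $\mathcal E:=\{1,\dots,K\}^2$ (ordered pairs of patches) and $B$ is the transition matrix of the Markov chain $(X_{2n},X_{2n+1})_{n\ge0}$ on $\mathcal E$, i.e. $B_{(i,j),(k,l)}=d_{jk}d_{kl}$. $\mathcal F_{\mathcal E}:=\{(f_E)_{E\in\mathcal E}: f_E\ge0,\ \sum_Ef_E=1\}$. For $f\in\mathcal F_{\mathcal E}$: $I(f):=\sup\{\sum_{E\in\mathcal E}f_E\log(v_E/(vB)_E): v=(v_E)_{E\in\mathcal E},\ v_E>0\ \forall E\}$ (possibly $+\infty$) and $R(f):=\sum_{E=(i,j)\in\mathcal E}f_E\log\big(m_i(e_1)m_j(e_2)\big)$. *)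

From Stdlib Require Import Reals Lra Lia ZArith.
Open Scope R_scope.

Inductive env := e1 | e2.

Fixpoint rsum (n : nat) (f : nat -> R) : R :=
  match n with
  | O => 0
  | S n' => rsum n' f + f n'
  end.

(* Matrices over indices 0..K-1 are functions nat -> nat -> R. *)
Fixpoint mpow (K : nat) (D : nat -> nat -> R) (n : nat) : nat -> nat -> R :=
  match n with
  | O => fun i j => if Nat.eqb i j then 1 else 0
  | S n' => fun i j => rsum K (fun k => mpow K D n' i k * D k j)
  end.

Definition stochastic (K : nat) (D : nat -> nat -> R) : Prop :=
  (forall i j, (i < K)%nat -> (j < K)%nat -> 0 <= D i j) /\
  (forall i, (i < K)%nat -> rsum K (fun j => D i j) = 1).

Definition irreducible (K : nat) (D : nat -> nat -> R) : Prop :=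
  forall i j, (i < K)%nat -> (j < K)%nat -> exists n, 0 < mpow K D n i j.

Definition aperiodic (K : nat) (D : nat -> nat -> R) : Prop :=
  forall i, (i < K)%nat ->
    forall d : nat, (forall n, 0 < mpow K D n i i -> Nat.divide d n) -> d = 1%nat.

Definition logp (x : R) : R := Rmax 0 (ln x).

Definition A2 (K : nat) (m : nat -> env -> R) (D : nat -> nat -> R) (i j : nat) : R :=
  rsum K (fun k => m i e1 * D i k * m k e2 * D k j).

(* lam is the maximal (Perron) eigenvalue of the real K x K matrix A:
   it is a (real) eigenvalue, and every complex eigenvalue a + i b
   (eigenvector u + i v, nonzero) satisfies |a + i b| <= lam. *)
Definition perron_eigenvalue (K : nat) (A : nat -> nat -> R) (lam : R) : Prop :=
  (exists x : nat -> R,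
      (exists i, (i < K)%nat /\ x i <> 0) /\
      forall i, (i < K)%nat -> rsum K (fun j => A i j * x j) = lam * x i) /\
  (forall (a b : R) (u v : nat -> R),
      (exists i, (i < K)%nat /\ (u i <> 0 \/ v i <> 0)) ->
      (forall i, (i < K)%nat ->
         rsum K (fun j => A i j * u j) = a * u i - b * v i /\
         rsum K (fun j => A i j * v j) = b * u i + a * v i) ->
      sqrt (a * a + b * b) <= lam).

(* Distributions f on E = {1..K}^2 (pairs (i,j) with i,j < K). *)
Definition in_FE (K : nat) (f : nat -> nat -> R) : Prop :=
  (forall i j, (i < K)%nat -> (j < K)%nat -> 0 <= f i j) /\
  rsum K (fun i => rsum K (fun j => f i j)) = 1.

Definition vpos (K : nat) (v : nat -> nat -> R) : Prop :=
  forall i j, (i < K)%nat -> (j < K)%nat -> 0 < v i j.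

(* (vB)_(k,l) with B_((i,j),(k,l)) = d_jk d_kl. *)
Definition vB (K : nat) (D : nat -> nat -> R) (v : nat -> nat -> R) (k l : nat) : R :=
  rsum K (fun i => rsum K (fun j => v i j * (D j k * D k l))).

(* sum_E f_E log(v_E/(vB)_E) (used only when it is finite, see Ival). *)
Definition Jfun (K : nat) (D : nat -> nat -> R) (f v : nat -> nat -> R) : R :=
  rsum K (fun k => rsum K (fun l => f k l * ln (v k l / vB K D v k l))).

(* Ival K D f c : I(f) is finite and equals c.  I(f) = +infinity exactly when
   either some term f_E log(v_E/(vB)_E) is +infinity (f_E > 0, (vB)_E = 0)
   for some positive v, or the set of values is unbounded above. *)
Definition Ival (K : nat) (D : nat -> nat -> R) (f : nat -> nat -> R) (c : R) : Prop :=
  (forall v, vpos K v -> forall k l, (k < K)%nat -> (l < K)%nat ->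
       0 < f k l -> 0 < vB K D v k l) /\
  is_lub (fun y => exists v, vpos K v /\ y = Jfun K D f v) c.

Definition Rfun (K : nat) (m : nat -> env -> R) (f : nat -> nat -> R) : R :=
  rsum K (fun i => rsum K (fun j => f i j * ln (m i e1 * m j e2))).

From Pilot Require Import Defs.
From Stdlib Require Import Reals Lra Lia Classical FunctionalExtensionality.
From mathcomp Require all_boot all_algebra Rstruct.
Open Scope R_scope.

(** Let [s = rho^2] be the Perron eigenvalue of the two-generation mean
    matrix [A2].  The proof has three parts.
    1. Perron-Frobenius.  [A2] is nonnegative and, since [D] is irreducible
       and aperiodic, irreducible (walks of even length suffice).  From the
       hypothesis that [s] is an eigenvalue dominating all eigenvalues, we
       obtain positive left and right eigenvectors [g] and [h] for [s].  The
       key step: a positive supersolution [A y >= t y] forces a real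
       eigenvalue [>= t]; this is proved with the resolvent vector
       [det (x I - A) adj (x I - A) y] and the intermediate value theorem
       (determinants and adjugates are taken from MathComp).
    2. Upper bound.  If [I(f)] is finite, testing it on the positive vectors
       [v = ell + del], where [ell_(k,l) = m_k(e1) m_l(e2) d_kl g_k], gives
       [R(f) - I(f) <= ln s].
    3. Attainment.  The distribution [fstar] proportional to
       [ell_(k,l) (D h)_l] is stationary for a reversed Markov kernel, and
       Jensen's inequality gives [I(fstar) = R(fstar) - ln s].
    Only the means [m] enter the formula. *)

Lemma rsum_ext K f g : (forall i, (i < K)%nat -> f i = g i) -> rsum K f = rsum K g.
Proof.
induction K as [|K IH]; intros H; simpl; [reflexivity|].
rewrite IH by (intros; apply H; lia). rewrite H by lia. reflexivity.
Qed.

Lemma rsum_plus K f g : rsum K (fun i => f i + g i) = rsum K f + rsum K g.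
Proof. induction K; simpl; [lra|]. rewrite IHK. lra. Qed.

Lemma rsum_minus K f g : rsum K (fun i => f i - g i) = rsum K f - rsum K g.
Proof. induction K; simpl; [lra|]. rewrite IHK. lra. Qed.

Lemma rsum_scal_l K c f : rsum K (fun i => c * f i) = c * rsum K f.
Proof. induction K; simpl; [lra|]. rewrite IHK. lra. Qed.

Lemma rsum_scal_r K c f : rsum K (fun i => f i * c) = rsum K f * c.
Proof. induction K; simpl; [lra|]. rewrite IHK. lra. Qed.

Lemma rsum_zero K : rsum K (fun _ => 0) = 0.
Proof. induction K; simpl; lra. Qed.

Lemma rsum_le K f g : (forall i, (i < K)%nat -> f i <= g i) -> rsum K f <= rsum K g.
Proof.
induction K as [|K IH]; intros H; simpl; [lra|].
assert (rsum K f <= rsum K g) by (apply IH; intros; apply H; lia).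
assert (f K <= g K) by (apply H; lia). lra.
Qed.

Lemma rsum_nonneg K f : (forall i, (i < K)%nat -> 0 <= f i) -> 0 <= rsum K f.
Proof. intros H. rewrite <- (rsum_zero K). now apply rsum_le. Qed.

Lemma rsum_swap K L (F : nat -> nat -> R) :
  rsum K (fun i => rsum L (fun j => F i j)) = rsum L (fun j => rsum K (fun i => F i j)).
Proof.
induction K; simpl; [now rewrite rsum_zero|].
rewrite IHK, <- rsum_plus. reflexivity.
Qed.

Lemma rsum_ge_term K f i :
  (forall j, (j < K)%nat -> 0 <= f j) -> (i < K)%nat -> f i <= rsum K f.
Proof.
induction K as [|K IH]; intros H Hi; [lia|]. simpl.
destruct (Nat.eq_dec i K) as [->|Hne].
- assert (0 <= rsum K f) by (apply rsum_nonneg; intros; apply H; lia). lra.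
- assert (f i <= rsum K f) by (apply IH; [intros; apply H|]; lia).
  assert (0 <= f K) by (apply H; lia). lra.
Qed.

Lemma rsum_pos K f i :
  (forall j, (j < K)%nat -> 0 <= f j) -> (i < K)%nat -> 0 < f i -> 0 < rsum K f.
Proof. intros. assert (f i <= rsum K f) by now apply rsum_ge_term. lra. Qed.

Lemma rsum_pos_witness K f : 0 < rsum K f -> exists i, (i < K)%nat /\ 0 < f i.
Proof.
intros H. apply NNPP. intros Hno.
assert (rsum K f <= rsum K (fun _ => 0)).
{ apply rsum_le. intros i Hi. apply Rnot_lt_le. intros Hf. apply Hno. eauto. }
rewrite rsum_zero in *. lra.
Qed.

Lemma rsum_delta K x f i : (i < K)%nat ->
  rsum K (fun j => (if Nat.eqb i j then x else 0) * f j) = x * f i.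
Proof.
induction K as [|K IH]; intros Hi; [lia|]. simpl.
destruct (Nat.eq_dec i K) as [->|Hne].
- rewrite Nat.eqb_refl, (rsum_ext K _ (fun _ => 0)), rsum_zero; [lra|].
  intros j Hj. destruct (Nat.eqb_spec K j); [lia|lra].
- rewrite IH by lia. destruct (Nat.eqb_spec i K); [lia|lra].
Qed.

Lemma rsum_abs K f : Rabs (rsum K f) <= rsum K (fun i => Rabs (f i)).
Proof.
induction K; simpl; [rewrite Rabs_R0; lra|].
eapply Rle_trans; [apply Rabs_triang|lra].
Qed.

Lemma continuity_rsum K (G : R -> nat -> R) :
  (forall i, continuity (fun x => G x i)) -> continuity (fun x => rsum K (G x)).
Proof.
intros H. induction K; simpl.
- now apply continuity_const.
- exact (continuity_plus (fun x => rsum K (G x)) (fun x => G x K) IHK (H K)).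
Qed.

Definition dsum K (F : nat -> nat -> R) : R := rsum K (fun i => rsum K (fun j => F i j)).

Lemma dsum_ext K F G :
  (forall i j, (i < K)%nat -> (j < K)%nat -> F i j = G i j) -> dsum K F = dsum K G.
Proof. intros H. apply rsum_ext. intros i Hi. apply rsum_ext. auto. Qed.

Lemma dsum_zero K : dsum K (fun _ _ => 0) = 0.
Proof.
unfold dsum. rewrite (rsum_ext K _ (fun _ => 0)) by (intros; apply rsum_zero). apply rsum_zero.
Qed.

Lemma dsum_plus K F G : dsum K (fun i j => F i j + G i j) = dsum K F + dsum K G.
Proof.
unfold dsum. rewrite <- rsum_plus. apply rsum_ext. intros. apply rsum_plus.
Qed.

Lemma dsum_minus K F G : dsum K (fun i j => F i j - G i j) = dsum K F - dsum K G.
Proof.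
unfold dsum. rewrite <- rsum_minus. apply rsum_ext. intros. apply rsum_minus.
Qed.

Lemma dsum_scal K c F : dsum K (fun i j => c * F i j) = c * dsum K F.
Proof.
unfold dsum. rewrite <- rsum_scal_l. apply rsum_ext. intros. apply rsum_scal_l.
Qed.

Lemma dsum_le K F G :
  (forall i j, (i < K)%nat -> (j < K)%nat -> F i j <= G i j) -> dsum K F <= dsum K G.
Proof. intros H. apply rsum_le. intros i Hi. apply rsum_le. auto. Qed.

Lemma dsum_nonneg K F :
  (forall i j, (i < K)%nat -> (j < K)%nat -> 0 <= F i j) -> 0 <= dsum K F.
Proof. intros H. apply rsum_nonneg. intros i Hi. apply rsum_nonneg. auto. Qed.

Lemma dsum_pos K F i j :
  (forall i j, (i < K)%nat -> (j < K)%nat -> 0 <= F i j) ->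
  (i < K)%nat -> (j < K)%nat -> 0 < F i j -> 0 < dsum K F.
Proof.
intros H Hi Hj Hp. apply (rsum_pos K _ i); auto.
- intros. apply rsum_nonneg. auto.
- apply (rsum_pos K _ j); auto.
Qed.

Lemma dsum_pos_witness K F :
  0 < dsum K F -> exists i j, (i < K)%nat /\ (j < K)%nat /\ 0 < F i j.
Proof.
intros H. destruct (rsum_pos_witness _ _ H) as [i [Hi H1]].
destruct (rsum_pos_witness _ _ H1) as [j [Hj H2]]. eauto.
Qed.

Lemma dsum_swap K (T : nat -> nat -> nat -> nat -> R) :
  dsum K (fun k l => dsum K (fun i j => T k l i j)) =
  dsum K (fun i j => dsum K (fun k l => T k l i j)).
Proof.
unfold dsum.
transitivity (rsum K (fun k => rsum K (fun i => rsum K (fun j => rsum K (fun l => T k l i j))))).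
- apply rsum_ext. intros. rewrite rsum_swap. apply rsum_ext. intros. apply rsum_swap.
- rewrite rsum_swap. apply rsum_ext. intros. apply rsum_swap.
Qed.

(** * Characteristic polynomial and adjugate of a real [K x K] matrix

    Real matrices are represented in [Defs] as functions [nat -> nat -> R];
    we transport them to MathComp matrices to use the determinant theory. *)
Module CharPoly.
Import mathcomp.boot.all_boot mathcomp.algebra.all_algebra mathcomp.reals_stdlib.Rstruct.
Import GRing.Theory.
Local Open Scope ring_scope.

Lemma rsum_big K (f : nat -> R) : rsum K f = \sum_(i < K) f i.
Proof. elim: K => [|K IH] /=; first by rewrite big_ord0. by rewrite big_ord_recr /= IH. Qed.

Lemma horner_continuity (p : {poly R}) : continuity (fun x => p.[x]).
Proof.
elim/poly_ind: p => [|p c IH].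
  apply: (continuity_eq (f := fun _ => 0)); first by move=> x; rewrite horner0.
  exact: continuity_const.
apply: (continuity_eq (f := fun x => Rplus (Rmult p.[x] x) c)).
  by move=> x; rewrite hornerMXaddC.
apply: continuity_plus; last by apply: continuity_const => ? ?.
apply: continuity_mult => //; exact: derivable_continuous derivable_id.
Qed.

Definition mx_of K (B : nat -> nat -> R) : 'M[R]_K := \matrix_(i < K, j < K) B i j.

Definition vec_of {K} (w : 'cV[R]_K) (j : nat) : R :=
  if (insub j : option 'I_K) is Some a then w a 0 else 0.

Definition charpoly_at K B x : R := \det (x%:M - mx_of K B).

Definition adjugate_at K B x (i j : nat) : R :=
  match (insub i : option 'I_K), (insub j : option 'I_K) with
  | Some a, Some b => (\adj (x%:M - mx_of K B)) a b
  | _, _ => 0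
  end.

Lemma eval_char_poly_mx K B x :
  map_mx (horner_eval x) (char_poly_mx (mx_of K B)) = x%:M - mx_of K B.
Proof.
apply/matrixP => i j; rewrite !mxE /horner_eval.
by rewrite hornerD hornerN hornerMn hornerX hornerC.
Qed.

Lemma charpoly_at_continuity K B : continuity (charpoly_at K B).
Proof.
apply: (continuity_eq (f := fun x => (char_poly (mx_of K B)).[x])); last exact: horner_continuity.
by move=> x; rewrite /charpoly_at -eval_char_poly_mx det_map_mx.
Qed.

Lemma adjugate_at_continuity K B i j : continuity (fun x => adjugate_at K B x i j).
Proof.
rewrite /adjugate_at; case: (insub i) => [a|]; last by apply: continuity_const => ? ?.
case: (insub j) => [b|]; last by apply: continuity_const => ? ?.
apply: (continuity_eq (f := fun x => ((\adj (char_poly_mx (mx_of K B))) a b).[x])).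
  by move=> x; rewrite -eval_char_poly_mx -map_mx_adj [in RHS]mxE.
exact: horner_continuity.
Qed.

Lemma adjugate_identity_mx K B x i k : (i < K)%coq_nat -> (k < K)%coq_nat ->
  rsum K (fun j => ((if Nat.eqb i j then x else 0) - B i j) * adjugate_at K B x j k)
  = if Nat.eqb i k then charpoly_at K B x else 0.
Proof.
move=> /ltP Hi /ltP Hk.
have := congr1 (fun M : 'M[R]_K => M (Ordinal Hi) (Ordinal Hk)) (mul_mx_adj (x%:M - mx_of K B)).
rewrite !mxE /= => E.
have -> : (if Nat.eqb i k then charpoly_at K B x else 0)
          = \det (x%:M - mx_of K B) *+ (Ordinal Hi == Ordinal Hk).
  case: (Nat.eqb_spec i k) => [e|ne] /=.
    have -> : Ordinal Hi = Ordinal Hk by apply: val_inj.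
    by rewrite eqxx.
  by case: eqP => // [[]].
rewrite rsum_big -E; apply: eq_bigr => b _.
rewrite /adjugate_at valK.
case: insubP => [c _ ck|]; last by rewrite Hk.
have -> : c = Ordinal Hk by apply: val_inj.
rewrite !mxE /=; congr (_ * _); congr (_ - _).
case: (Nat.eqb_spec i b) => [e|ne].
  have -> : Ordinal Hi = b by apply: val_inj.
  by rewrite eqxx.
by case: eqP => // e; case: ne; rewrite -e.
Qed.

Lemma charpoly_at_transpose K B x : charpoly_at K (fun i j => B j i) x = charpoly_at K B x.
Proof.
rewrite /charpoly_at -det_tr; congr (\det _).
by apply/matrixP => i j; rewrite !mxE eq_sym.
Qed.

Lemma mx_of_mulmx K B (w : 'cV[R]_K) (i : 'I_K) :
  (mx_of K B *m w) i 0 = rsum K (fun j => B i j * vec_of w j).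
Proof. by rewrite rsum_big mxE; apply: eq_bigr => j _; rewrite /vec_of valK mxE. Qed.

(** A root of [det (x I - B)] is a real eigenvalue: [(x I - B)^T] has a
    nonzero kernel vector, i.e. [x I - B] has one. *)
Lemma charpoly_root_eigenvector_mx K B x : charpoly_at K B x = 0 ->
  exists v : nat -> R, (exists i, (i < K)%coq_nat /\ v i <> 0) /\
    forall i, (i < K)%coq_nat -> rsum K (fun j => B i j * v j) = x * v i.
Proof.
move=> H0.
have /det0P [w Hw Hker] : \det (x%:M - mx_of K B)^T == 0 by rewrite det_tr; apply/eqP.
have HM : mx_of K B *m w^T = x *: w^T.
  have : (x%:M - mx_of K B) *m w^T = 0.
    by rewrite -[LHS]trmxK trmx_mul trmxK Hker trmx0.
  by rewrite mulmxBl mul_scalar_mx => /eqP; rewrite subr_eq0 => /eqP ->.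
exists (vec_of w^T); split.
  have [a Ha] : exists a, w 0 a != 0.
    apply/existsP; apply: contraNT Hw => /existsPn H; apply/eqP/rowP => a.
    by rewrite mxE; apply/eqP; exact: negbNE (H a).
  exists (val a); split; first by apply/ltP; exact: ltn_ord.
  by rewrite /vec_of valK mxE; apply/eqP.
move=> i /ltP Hi.
have := congr1 (fun M : 'cV[R]_K => M (Ordinal Hi) 0) HM.
rewrite mx_of_mulmx /= => ->.
rewrite /vec_of mxE; case: insubP => [c _ ci|]; last by rewrite Hi.
by have -> : c = Ordinal Hi by apply: val_inj.
Qed.

Lemma eigenvector_charpoly_root_mx K B x (v : nat -> R) :
  (exists i, (i < K)%coq_nat /\ v i <> 0) ->
  (forall i, (i < K)%coq_nat -> rsum K (fun j => B i j * v j) = x * v i) ->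
  charpoly_at K B x = 0.
Proof.
move=> [i0 [/ltP Hi0 Hv0]] Hv.
apply/eqP; apply: contraT => Hd.
have Hu : (x%:M - mx_of K B) \in unitmx by rewrite unitmxE unitfE.
pose vc : 'cV[R]_K := \col_j v j.
have HMv : mx_of K B *m vc = x *: vc.
  apply/colP => i.
  rewrite mx_of_mulmx (rsum_ext _ _ (fun j => B i j * v j)); first by rewrite Hv ?mxE //; apply/ltP.
  by move=> j /ltP Hj; rewrite /vec_of insubT mxE.
have Hz : (x%:M - mx_of K B) *m vc = 0 by rewrite mulmxBl mul_scalar_mx HMv subrr.
have := mulKmx Hu vc; rewrite Hz mulmx0 => /colP /(_ (Ordinal Hi0)).
by rewrite !mxE => /esym.
Qed.

(** The same statements, read with the operations of the real numbers of the
    standard library (they are convertible to the ring operations above). *)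
Local Close Scope ring_scope.

Lemma adjugate_identity K B x i k : (i < K)%coq_nat -> (k < K)%coq_nat ->
  rsum K (fun j => ((if Nat.eqb i j then x else 0) - B i j) * adjugate_at K B x j k)
  = if Nat.eqb i k then charpoly_at K B x else 0.
Proof. exact (adjugate_identity_mx K B x i k). Qed.

Lemma charpoly_root_eigenvector K B x : charpoly_at K B x = 0 ->
  exists v : nat -> R, (exists i, (i < K)%coq_nat /\ v i <> 0) /\
    forall i, (i < K)%coq_nat -> rsum K (fun j => B i j * v j) = x * v i.
Proof. exact (charpoly_root_eigenvector_mx K B x). Qed.

Lemma eigenvector_charpoly_root K B x (v : nat -> R) :
  (exists i, (i < K)%coq_nat /\ v i <> 0) ->
  (forall i, (i < K)%coq_nat -> rsum K (fun j => B i j * v j) = x * v i) ->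
  charpoly_at K B x = 0.
Proof. exact (eigenvector_charpoly_root_mx K B x v). Qed.

End CharPoly.

(** * Nonnegative matrices, powers and irreducibility *)

Definition nonneg_mx K (B : nat -> nat -> R) : Prop :=
  forall i j, (i < K)%nat -> (j < K)%nat -> 0 <= B i j.

Definition transpose (B : nat -> nat -> R) (i j : nat) : R := B j i.

Lemma mpow_nonneg K B n : nonneg_mx K B -> nonneg_mx K (mpow K B n).
Proof.
intros HB. induction n; intros i j Hi Hj; simpl.
- destruct (Nat.eqb i j); lra.
- apply rsum_nonneg. intros k Hk. apply Rmult_le_pos; auto.
Qed.

Lemma mpow_add K B a b i j : (j < K)%nat ->
  mpow K B (a + b) i j = rsum K (fun t => mpow K B a i t * mpow K B b t j).
Proof.
revert j. induction b as [|b IH]; intros j Hj.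
- rewrite Nat.add_0_r. simpl.
  rewrite (rsum_ext K _ (fun t => (if Nat.eqb j t then 1 else 0) * mpow K B a i t)).
  + rewrite rsum_delta by auto. lra.
  + intros t Ht. rewrite Nat.eqb_sym. lra.
- rewrite Nat.add_succ_r. cbn [mpow].
  transitivity (rsum K (fun k => rsum K (fun t => mpow K B a i t * mpow K B b t k * B k j))).
  { apply rsum_ext. intros k Hk. rewrite IH, <- rsum_scal_r by auto. reflexivity. }
  rewrite rsum_swap. apply rsum_ext. intros t Ht. rewrite <- rsum_scal_l.
  apply rsum_ext. intros. lra.
Qed.

Lemma mpow_one K B i j : (i < K)%nat -> mpow K B 1 i j = B i j.
Proof. intros Hi. cbn [mpow]. rewrite rsum_delta; auto; lra. Qed.

Lemma mpow_pos_concat K B a b i t j : nonneg_mx K B ->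
  (i < K)%nat -> (t < K)%nat -> (j < K)%nat ->
  0 < mpow K B a i t -> 0 < mpow K B b t j -> 0 < mpow K B (a + b) i j.
Proof.
intros HB Hi Ht Hj H1 H2. rewrite mpow_add by auto.
apply (rsum_pos K _ t); auto.
- intros k Hk. apply Rmult_le_pos; apply mpow_nonneg; auto.
- now apply Rmult_lt_0_compat.
Qed.

Lemma mpow_support_mono K B C n i j : nonneg_mx K B -> nonneg_mx K C ->
  (forall a b, (a < K)%nat -> (b < K)%nat -> 0 < C a b -> 0 < B a b) ->
  (i < K)%nat -> (j < K)%nat -> 0 < mpow K C n i j -> 0 < mpow K B n i j.
Proof.
intros HB HC HCB Hi. revert j. induction n as [|n IH]; intros j Hj H; [exact H|].
simpl in *. destruct (rsum_pos_witness _ _ H) as [k [Hk Hpos]].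
assert (0 < mpow K C n i k /\ 0 < C k j) as [H1 H2].
{ pose proof (mpow_nonneg K C n HC i k Hi Hk). pose proof (HC k j Hk Hj).
  split; apply Rnot_le_lt; intros Hle; nra. }
apply (rsum_pos K _ k); auto.
- intros t Ht. apply Rmult_le_pos; [apply mpow_nonneg|]; auto.
- apply Rmult_lt_0_compat; auto.
Qed.

Lemma mpow_even K B q i j : (j < K)%nat ->
  mpow K B (2 * q) i j = mpow K (mpow K B 2) q i j.
Proof.
revert j. induction q as [|q IH]; intros j Hj; [reflexivity|].
replace (2 * S q)%nat with (2 * q + 2)%nat by lia.
rewrite mpow_add by auto.
change (mpow K (mpow K B 2) (S q) i j)
  with (rsum K (fun t => mpow K (mpow K B 2) q i t * mpow K B 2 t j)).
apply rsum_ext. intros t Ht. now rewrite IH.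
Qed.

Lemma mpow_transpose K B n i j : (i < K)%nat -> (j < K)%nat ->
  mpow K (transpose B) n i j = mpow K B n j i.
Proof.
revert i j. induction n as [|n IH]; intros i j Hi Hj.
- simpl. now rewrite Nat.eqb_sym.
- change (S n) with (1 + n)%nat. rewrite (mpow_add K B 1 n j i) by auto.
  change (mpow K (transpose B) (S n) i j)
    with (rsum K (fun k => mpow K (transpose B) n i k * transpose B k j)).
  apply rsum_ext. intros k Hk. rewrite IH, mpow_one by auto. unfold transpose. lra.
Qed.

Lemma irreducible_transpose K B : irreducible K B -> irreducible K (transpose B).
Proof.
intros H i j Hi Hj. destruct (H j i Hj Hi) as [n Hn]. exists n. now rewrite mpow_transpose.
Qed.

Lemma odd_loop K D i : (i < K)%nat -> aperiodic K D ->
  exists q, 0 < mpow K D (2 * q + 1) i i.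
Proof.
intros Hi Hap. apply NNPP. intros Hno.
enough (2%nat = 1%nat) by lia.
apply (Hap i Hi 2%nat). intros n Hn.
destruct (Nat.Even_or_Odd n) as [[q ->]|[q ->]].
- exists q. lia.
- exfalso. apply Hno. now exists q.
Qed.

Lemma even_walk K D i j : stochastic K D -> irreducible K D -> aperiodic K D ->
  (i < K)%nat -> (j < K)%nat -> exists q, 0 < mpow K D (2 * q) i j.
Proof.
intros HD Hirr Hap Hi Hj. destruct (Hirr i j Hi Hj) as [n Hn].
destruct (Nat.Even_or_Odd n) as [[q Hq]|[q Hq]]; subst n; [eauto|].
destruct (odd_loop K D i Hi Hap) as [q' Hq'].
exists (q + q' + 1)%nat.
replace (2 * (q + q' + 1))%nat with ((2 * q' + 1) + (2 * q + 1))%nat by lia.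
apply (mpow_pos_concat K D _ _ i i j); auto. exact (proj1 HD).
Qed.

Lemma A2_nonneg K m D : stochastic K D -> (forall i w, (i < K)%nat -> 0 < m i w) ->
  nonneg_mx K (A2 K m D).
Proof.
intros HD Hm i j Hi Hj. apply rsum_nonneg. intros k Hk.
pose proof (Hm i e1 Hi). pose proof (Hm k e2 Hk).
pose proof (proj1 HD i k Hi Hk). pose proof (proj1 HD k j Hk Hj).
repeat apply Rmult_le_pos; lra.
Qed.

Lemma A2_support K m D i j : stochastic K D -> (forall i w, (i < K)%nat -> 0 < m i w) ->
  (i < K)%nat -> (j < K)%nat -> 0 < mpow K D 2 i j -> 0 < A2 K m D i j.
Proof.
intros HD Hm Hi Hj H.
change 2%nat with (1 + 1)%nat in H. rewrite mpow_add in H by auto.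
destruct (rsum_pos_witness _ _ H) as [k [Hk Hpos]].
rewrite !mpow_one in Hpos by auto.
pose proof (proj1 HD i k Hi Hk). pose proof (proj1 HD k j Hk Hj).
assert (0 < D i k /\ 0 < D k j) as [Hik Hkj] by (split; apply Rnot_le_lt; intros; nra).
apply (rsum_pos K _ k); auto.
- intros t Ht. pose proof (Hm i e1 Hi). pose proof (Hm t e2 Ht).
  pose proof (proj1 HD i t Hi Ht). pose proof (proj1 HD t j Ht Hj).
  repeat apply Rmult_le_pos; lra.
- pose proof (Hm i e1 Hi). pose proof (Hm k e2 Hk). repeat apply Rmult_lt_0_compat; auto.
Qed.

(** [A2] is irreducible: even walks of [D] are walks of [D^2], hence of [A2]. *)
Lemma A2_irreducible K m D : stochastic K D -> (forall i w, (i < K)%nat -> 0 < m i w) ->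
  irreducible K D -> aperiodic K D -> irreducible K (A2 K m D).
Proof.
intros HD Hm Hirr Hap i j Hi Hj.
destruct (even_walk K D i j HD Hirr Hap Hi Hj) as [q Hq]. exists q.
rewrite mpow_even in Hq by auto.
apply (mpow_support_mono K _ (mpow K D 2)); auto.
- now apply A2_nonneg.
- apply mpow_nonneg. exact (proj1 HD).
- intros a b Ha Hb. now apply A2_support.
Qed.

(** * Perron-Frobenius vectors of an irreducible nonnegative matrix *)

Definition mulv K (B : nat -> nat -> R) (y : nat -> R) (i : nat) : R :=
  rsum K (fun j => B i j * y j).

Lemma mulv_scal K B c w i : mulv K B (fun j => c * w j) i = c * mulv K B w i.
Proof. unfold mulv. rewrite <- rsum_scal_l. apply rsum_ext. intros. ring. Qed.

Fixpoint vmin (n : nat) (f : nat -> R) : R :=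
  match n with O => f O | S n' => Rmin (vmin n' f) (f (S n')) end.

Lemma vmin_le n f i : (i <= n)%nat -> vmin n f <= f i.
Proof.
induction n as [|n IH]; intros Hi; simpl.
- replace i with 0%nat by lia. lra.
- destruct (Nat.eq_dec i (S n)) as [->|Hne]; [apply Rmin_r|].
  eapply Rle_trans; [apply Rmin_l|]. apply IH. lia.
Qed.

Lemma vmin_attained n f : exists i, (i <= n)%nat /\ vmin n f = f i.
Proof.
induction n as [|n [i [Hi E]]]; simpl; [now exists 0%nat|].
unfold Rmin. destruct (Rle_dec (vmin n f) (f (S n))).
- exists i. split; [lia|auto].
- exists (S n). split; auto.
Qed.

Lemma exists_argmin K f : (1 <= K)%nat ->
  exists i0, (i0 < K)%nat /\ forall i, (i < K)%nat -> f i0 <= f i.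
Proof.
intros HK. destruct (vmin_attained (K - 1) f) as [i0 [Hi0 E]].
exists i0. split; [lia|]. intros i Hi. rewrite <- E. apply vmin_le. lia.
Qed.

(** [min] of two continuous functions is continuous, as
    [min a b = (a + b - |a - b|) / 2]. *)
Lemma continuity_Rmin f g :
  continuity f -> continuity g -> continuity (fun x => Rmin (f x) (g x)).
Proof.
intros Hf Hg.
replace (fun x => Rmin (f x) (g x)) with (fun x => (f x + g x - Rabs (f x - g x)) * / 2).
- apply (continuity_mult _ (fun _ => / 2)); [|now apply continuity_const].
  apply continuity_minus; [now apply continuity_plus|].
  apply (continuity_comp (fun x => f x - g x) Rabs); [now apply continuity_minus|].
  apply Rcontinuity_abs.
- apply functional_extensionality. intros x. unfold Rmin.
  destruct (Rle_dec (f x) (g x)); [rewrite Rabs_left1|rewrite Rabs_right]; lra.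
Qed.

Lemma continuity_vmin n (G : R -> nat -> R) :
  (forall i, continuity (fun x => G x i)) -> continuity (fun x => vmin n (G x)).
Proof.
intros H. induction n; simpl; auto.
exact (continuity_Rmin (fun x => vmin n (G x)) (fun x => G x (S n)) IHn (H (S n))).
Qed.

Lemma defect_at_zero_entry K B x w i : nonneg_mx K B ->
  (forall j, (j < K)%nat -> 0 <= w j) -> (i < K)%nat -> w i = 0 ->
  x * w i - mulv K B w i <= 0.
Proof.
intros HB Hw Hi Hz. rewrite Hz, Rmult_0_r.
assert (0 <= mulv K B w i) by (apply rsum_nonneg; intros; apply Rmult_le_pos; auto).
lra.
Qed.

Lemma positive_of_large_defect K B x w : (1 <= K)%nat -> nonneg_mx K B -> dsum K B < x ->
  (forall i, (i < K)%nat -> 0 < x * w i - mulv K B w i) ->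
  forall i, (i < K)%nat -> 0 < w i.
Proof.
intros HK HB Hx Hdef.
destruct (exists_argmin K w HK) as [i0 [Hi0 Hmin]].
enough (0 < w i0) by (intros i Hi; specialize (Hmin i Hi); lra).
apply Rnot_le_lt. intros Hle.
set (r := rsum K (fun j => B i0 j)).
assert (Hr : r <= dsum K B).
{ apply (rsum_ge_term K (fun i => rsum K (fun j => B i j))); auto.
  intros. apply rsum_nonneg. auto. }
assert (0 <= r) by (apply rsum_nonneg; auto).
assert (r * w i0 <= mulv K B w i0).
{ unfold r, mulv. rewrite <- rsum_scal_r. apply rsum_le. intros j Hj.
  apply Rmult_le_compat_l; auto. }
specialize (Hdef i0 Hi0). nra.
Qed.

(** A nonnegative strict subsolution ([x w - B w > 0]) and a positive
    supersolution ([B y >= x y]) cannot coexist: subtracting from [w] the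
    largest multiple of [y] keeping it nonnegative creates a zero entry with
    positive defect. *)
Lemma no_sub_and_super K B x y w : (1 <= K)%nat -> nonneg_mx K B ->
  (forall i, (i < K)%nat -> 0 < y i) ->
  (forall i, (i < K)%nat -> x * y i <= mulv K B y i) ->
  (forall i, (i < K)%nat -> 0 <= w i) ->
  (forall i, (i < K)%nat -> 0 < x * w i - mulv K B w i) -> False.
Proof.
intros HK HB Hy Hsup Hw Hdef.
destruct (exists_argmin K (fun i => w i / y i) HK) as [i2 [Hi2 Hmin]].
set (kap := w i2 / y i2).
assert (Hkap : 0 <= kap) by (apply Rmult_le_pos; [auto|apply Rlt_le, Rinv_0_lt_compat; auto]).
set (z := fun i => w i - kap * y i).
assert (Hz : forall i, (i < K)%nat -> 0 <= z i).
{ intros i Hi. specialize (Hmin i Hi). pose proof (Hy i Hi). unfold z.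
  apply (Rmult_le_compat_r (y i)) in Hmin; [|lra].
  replace (w i / y i * y i) with (w i) in Hmin by (field; lra). fold kap in Hmin. lra. }
assert (Hz2 : z i2 = 0).
{ unfold z, kap. pose proof (Hy i2 Hi2). field. lra. }
assert (Hmz : mulv K B z i2 = mulv K B w i2 - kap * mulv K B y i2).
{ unfold mulv. rewrite <- rsum_scal_l, <- rsum_minus. apply rsum_ext. intros. unfold z. ring. }
pose proof (defect_at_zero_entry K B x z i2 HB Hz Hi2 Hz2).
pose proof (Hdef i2 Hi2). pose proof (Hsup i2 Hi2).
unfold z in *. rewrite Hmz in *. nra.
Qed.

(** For [det (x I - B) <> 0], the vector
    [w(x) = det (x I - B) adj (x I - B) y] solves
    [x w - B w = det (x I - B)^2 y]; it depends continuously on [x]. *)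
Section Resolvent.
Variables (K : nat) (B : nat -> nat -> R) (y : nat -> R).

Definition adj_apply (x : R) (i : nat) : R :=
  rsum K (fun j => CharPoly.adjugate_at K B x i j * y j).

Lemma adj_apply_defect x i : (i < K)%nat ->
  x * adj_apply x i - mulv K B (adj_apply x) i = CharPoly.charpoly_at K B x * y i.
Proof.
intros Hi.
transitivity (rsum K (fun j => ((if Nat.eqb i j then x else 0) - B i j) * adj_apply x j)).
{ unfold mulv. rewrite <- (rsum_delta K x (adj_apply x) i Hi), <- rsum_minus.
  apply rsum_ext. intros. ring. }
rewrite <- (rsum_delta K (CharPoly.charpoly_at K B x) y i Hi). unfold adj_apply.
rewrite (rsum_ext K _ (fun j => rsum K (fun k =>
  ((if Nat.eqb i j then x else 0) - B i j) * CharPoly.adjugate_at K B x j k * y k))).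
- rewrite rsum_swap. apply rsum_ext. intros k Hk.
  rewrite rsum_scal_r, CharPoly.adjugate_identity by auto. reflexivity.
- intros j Hj. rewrite <- rsum_scal_l. apply rsum_ext. intros. ring.
Qed.

Definition resolvent (x : R) (i : nat) : R := CharPoly.charpoly_at K B x * adj_apply x i.

Lemma resolvent_defect x i : (i < K)%nat ->
  x * resolvent x i - mulv K B (resolvent x) i = (CharPoly.charpoly_at K B x) ^ 2 * y i.
Proof.
intros Hi. unfold resolvent. rewrite mulv_scal.
replace (CharPoly.charpoly_at K B x ^ 2 * y i)
  with (CharPoly.charpoly_at K B x * (CharPoly.charpoly_at K B x * y i)) by ring.
rewrite <- adj_apply_defect by auto. ring.
Qed.

Lemma resolvent_min_continuity n : continuity (fun x => vmin n (resolvent x)).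
Proof.
apply continuity_vmin. intros i. unfold resolvent, adj_apply.
apply continuity_mult; [apply CharPoly.charpoly_at_continuity|].
apply (continuity_rsum K (fun x j => CharPoly.adjugate_at K B x i j * y j)).
intros j. apply (continuity_mult _ (fun _ => y j)); [apply CharPoly.adjugate_at_continuity|].
now apply continuity_const.
Qed.

End Resolvent.

(** Otherwise [det (x I - B)] has no zero on [[t, +oo)], so the resolvent
    vector [w(x)] has a positive defect there; [w(x) > 0] for large [x], and
    its minimal entry cannot vanish on [[t, +oo)], so by the intermediate
    value theorem [w(t) >= 0], which contradicts [no_sub_and_super]. *)
Lemma real_eigenvalue_above K B y t : (1 <= K)%nat -> nonneg_mx K B ->
  (forall i, (i < K)%nat -> 0 < y i) ->
  (forall i, (i < K)%nat -> t * y i <= mulv K B y i) ->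
  exists x, t <= x /\ CharPoly.charpoly_at K B x = 0.
Proof.
intros HK HB Hy Hsup. apply NNPP. intros Hno.
set (w := resolvent K B y).
set (F := fun x => vmin (K - 1) (w x)).
assert (Hdef : forall x i, t <= x -> (i < K)%nat -> 0 < x * w x i - mulv K B (w x) i).
{ intros x i Hx Hi. unfold w. rewrite resolvent_defect by auto.
  assert (CharPoly.charpoly_at K B x <> 0) by (intros E; apply Hno; eauto).
  apply Rmult_lt_0_compat; auto. rewrite <- Rsqr_pow2. now apply Rsqr_pos_lt. }
assert (Hzero : forall z, t <= z -> F z <> 0).
{ intros z Hz E. destruct (vmin_attained (K - 1) (w z)) as [i [Hi Ei]].
  assert (Hi' : (i < K)%nat) by lia.
  assert (Hw : forall j, (j < K)%nat -> 0 <= w z j).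
  { intros j Hj. rewrite <- E. apply vmin_le. lia. }
  assert (Hwi : w z i = 0) by (unfold F in E; lra).
  pose proof (defect_at_zero_entry K B z (w z) i HB Hw Hi' Hwi).
  pose proof (Hdef z i Hz Hi'). lra. }
set (x0 := Rmax t 0 + dsum K B + 1).
assert (Hx0 : t < x0 /\ dsum K B < x0).
{ assert (0 <= dsum K B) by (apply dsum_nonneg; auto).
  pose proof (Rmax_l t 0). pose proof (Rmax_r t 0). unfold x0. lra. }
assert (Fx0 : 0 < F x0).
{ destruct (vmin_attained (K - 1) (w x0)) as [i [Hi E]]. unfold F. rewrite E.
  apply (positive_of_large_defect K B x0); try lia; auto; [lra|].
  intros j Hj. apply Hdef; auto. lra. }
assert (Ft : 0 < F t).
{ apply Rnot_le_lt. intros [Hneg|E]; [|exact (Hzero t (Rle_refl t) E)].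
  destruct (IVT F t x0 (resolvent_min_continuity K B y (K - 1)) (proj1 Hx0) Hneg Fx0)
    as [z [Hz E]].
  exact (Hzero z (proj1 Hz) E). }
apply (no_sub_and_super K B t y (w t)); auto.
- intros i Hi. apply Rlt_le. eapply Rlt_le_trans; [exact Ft|]. apply vmin_le. lia.
- intros i Hi. apply Hdef; auto. lra.
Qed.

Definition neumann K B N (w : nat -> R) (i : nat) : R :=
  rsum N (fun n => mulv K (mpow K B n) w i).

Lemma mulv_mpow_comm K B n w i : (i < K)%nat ->
  mulv K B (mulv K (mpow K B n) w) i = mulv K (mpow K B n) (mulv K B w) i.
Proof.
intros Hi. unfold mulv.
transitivity (rsum K (fun k => mpow K B (1 + n) i k * w k)).
- rewrite (rsum_ext K _ (fun j => rsum K (fun k => B i j * mpow K B n j k * w k))).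
  + rewrite rsum_swap. apply rsum_ext. intros k Hk.
    rewrite mpow_add, <- rsum_scal_r by auto. apply rsum_ext. intros j Hj.
    now rewrite mpow_one.
  + intros j Hj. rewrite <- rsum_scal_l. apply rsum_ext. intros. ring.
- rewrite (rsum_ext K (fun j => mpow K B n i j * rsum K (fun k => B j k * w k))
    (fun j => rsum K (fun k => mpow K B n i j * B j k * w k))).
  + rewrite rsum_swap. apply rsum_ext. intros k Hk. cbn [Nat.add mpow].
    now rewrite <- rsum_scal_r.
  + intros j Hj. rewrite <- rsum_scal_l. apply rsum_ext. intros. ring.
Qed.

Lemma neumann_defect K B N s w i : (i < K)%nat ->
  mulv K B (neumann K B N w) i - s * neumann K B N w i =
  neumann K B N (fun j => mulv K B w j - s * w j) i.
Proof.
intros Hi. unfold neumann.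
assert (E : mulv K B (fun j => rsum N (fun n => mulv K (mpow K B n) w j)) i
            = rsum N (fun n => mulv K B (mulv K (mpow K B n) w) i)).
{ unfold mulv at 1. rewrite (rsum_ext K _ (fun j => rsum N (fun n => B i j * mulv K (mpow K B n) w j))).
  - apply rsum_swap.
  - intros. symmetry. apply rsum_scal_l. }
rewrite E, <- rsum_scal_l, <- rsum_minus. apply rsum_ext. intros n Hn.
rewrite mulv_mpow_comm by auto. unfold mulv.
rewrite <- rsum_scal_l, <- rsum_minus. apply rsum_ext. intros. ring.
Qed.

Lemma neumann_nonneg K B N w i : nonneg_mx K B -> (forall j, (j < K)%nat -> 0 <= w j) ->
  (i < K)%nat -> 0 <= neumann K B N w i.
Proof.
intros HB Hw Hi. apply rsum_nonneg. intros n Hn. apply rsum_nonneg. intros j Hj.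
apply Rmult_le_pos; auto. now apply mpow_nonneg.
Qed.

Lemma neumann_ge K B N w i : nonneg_mx K B -> (forall j, (j < K)%nat -> 0 <= w j) ->
  (i < K)%nat -> (1 <= N)%nat -> w i <= neumann K B N w i.
Proof.
intros HB Hw Hi HN.
replace (w i) with (mulv K (mpow K B 0) w i) by (unfold mulv; simpl; rewrite rsum_delta by auto; lra).
apply (rsum_ge_term N (fun n => mulv K (mpow K B n) w i)); [|lia].
intros n Hn. apply rsum_nonneg. intros j Hj. apply Rmult_le_pos; auto. now apply mpow_nonneg.
Qed.

Lemma bounded_witnesses K (P : nat -> nat -> Prop) :
  (forall i, (i < K)%nat -> exists n, P i n) ->
  exists N, forall i, (i < K)%nat -> exists n, (n < N)%nat /\ P i n.
Proof.
induction K as [|K IH]; intros H; [exists 0%nat; intros; lia|].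
destruct IH as [N HN]; [intros; apply H; lia|].
destruct (H K ltac:(lia)) as [n Hn].
exists (S (Nat.max N n)). intros i Hi. destruct (Nat.eq_dec i K) as [->|Hne].
- exists n. split; [lia|auto].
- destruct (HN i ltac:(lia)) as [n' [Hn' Hp]]. exists n'. split; [lia|auto].
Qed.

Lemma neumann_positive K B w j0 : nonneg_mx K B -> irreducible K B ->
  (forall j, (j < K)%nat -> 0 <= w j) -> (j0 < K)%nat -> 0 < w j0 ->
  exists N, forall i, (i < K)%nat -> 0 < neumann K B N w i.
Proof.
intros HB Hirr Hw Hj0 Hwj.
destruct (bounded_witnesses K (fun i n => 0 < mpow K B n i j0)) as [N HN].
{ intros i Hi. now apply Hirr. }
exists N. intros i Hi. destruct (HN i Hi) as [n [Hn Hp]].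
apply (rsum_pos N _ n); auto.
- intros n' Hn'. apply rsum_nonneg. intros j Hj. apply Rmult_le_pos; auto. now apply mpow_nonneg.
- apply (rsum_pos K _ j0); auto.
  + intros j Hj. apply Rmult_le_pos; auto. now apply mpow_nonneg.
  + now apply Rmult_lt_0_compat.
Qed.

Lemma strict_supersolution K B s y : (1 <= K)%nat ->
  (forall i, (i < K)%nat -> 0 < y i) ->
  (forall i, (i < K)%nat -> 0 < mulv K B y i - s * y i) ->
  exists t, s < t /\ forall i, (i < K)%nat -> t * y i <= mulv K B y i.
Proof.
intros HK Hy Hdef.
destruct (exists_argmin K (fun i => (mulv K B y i - s * y i) / y i) HK) as [i0 [Hi0 Hmin]].
set (del := (mulv K B y i0 - s * y i0) / y i0).
assert (0 < del) by (apply Rdiv_lt_0_compat; auto).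
exists (s + del). split; [lra|]. intros i Hi.
specialize (Hmin i Hi). fold del in Hmin. pose proof (Hy i Hi).
apply (Rmult_le_compat_r (y i)) in Hmin; [|lra].
replace ((mulv K B y i - s * y i) / y i * y i) with (mulv K B y i - s * y i) in Hmin
  by (field; lra).
lra.
Qed.

(** If no positive supersolution exists above [s], a nonnegative nonzero
    supersolution [B w >= s w] of an irreducible [B] yields a positive
    eigenvector for [s]: its Neumann sum is positive and must have zero
    defect, since a nonzero nonnegative defect would become positive after a
    second Neumann sum. *)
Lemma positive_eigenvector K B s w j0 : (1 <= K)%nat -> nonneg_mx K B -> irreducible K B ->
  (forall t y, s < t -> (forall i, (i < K)%nat -> 0 < y i) ->
     ~ (forall i, (i < K)%nat -> t * y i <= mulv K B y i)) ->
  (forall j, (j < K)%nat -> 0 <= w j) -> (j0 < K)%nat -> 0 < w j0 ->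
  (forall i, (i < K)%nat -> s * w i <= mulv K B w i) ->
  exists h, (forall i, (i < K)%nat -> 0 < h i) /\
            (forall i, (i < K)%nat -> mulv K B h i = s * h i).
Proof.
intros HK HB Hirr Hno Hw Hj0 Hwj Hsup.
destruct (neumann_positive K B w j0 HB Hirr Hw Hj0 Hwj) as [N1 HN1].
set (y1 := neumann K B N1 w).
set (z := fun i => mulv K B y1 i - s * y1 i).
assert (Hz : forall i, (i < K)%nat -> 0 <= z i).
{ intros i Hi. unfold z, y1. rewrite neumann_defect by auto.
  apply neumann_nonneg; auto. intros j Hj. specialize (Hsup j Hj). lra. }
destruct (classic (exists j1, (j1 < K)%nat /\ z j1 <> 0)) as [[j1 [Hj1 Hzj1]]|Hall].
2:{ exists y1. split; [exact HN1|]. intros i Hi.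
    apply NNPP. intros Hne. apply Hall. exists i. split; auto.
    unfold z. intros E. apply Hne. lra. }
exfalso.
assert (Hzj1pos : 0 < z j1).
{ destruct (Rle_lt_or_eq_dec 0 (z j1) (Hz j1 Hj1)); [auto|congruence]. }
destruct (neumann_positive K B z j1 HB Hirr Hz Hj1 Hzj1pos) as [N2 HN2].
assert (HN2pos : (1 <= N2)%nat).
{ destruct N2; [|lia]. specialize (HN2 j1 Hj1). unfold neumann in HN2. simpl in HN2. lra. }
set (y2 := neumann K B N2 y1).
assert (Hy2 : forall i, (i < K)%nat -> 0 < y2 i).
{ intros i Hi. eapply Rlt_le_trans; [apply (HN1 i Hi)|].
  apply neumann_ge; auto. intros j Hj. apply Rlt_le. auto. }
destruct (strict_supersolution K B s y2 HK Hy2) as [t [Ht Hty]].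
{ intros i Hi. unfold y2. rewrite neumann_defect by auto. now apply HN2. }
exact (Hno t y2 Ht Hy2 Hty).
Qed.

Lemma abs_supersolution K B s x : nonneg_mx K B -> 0 <= s ->
  (forall i, (i < K)%nat -> mulv K B x i = s * x i) ->
  forall i, (i < K)%nat -> s * Rabs (x i) <= mulv K B (fun j => Rabs (x j)) i.
Proof.
intros HB Hs He i Hi.
replace (s * Rabs (x i)) with (Rabs (mulv K B x i))
  by (rewrite He, Rabs_mult, (Rabs_right s) by (try assumption; lra); lra).
eapply Rle_trans; [apply rsum_abs|]. apply rsum_le. intros j Hj.
rewrite Rabs_mult, (Rabs_right (B i j)); [lra|]. apply Rle_ge. auto.
Qed.

Lemma no_supersolution_above K B lam : (1 <= K)%nat -> nonneg_mx K B ->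
  (forall x v, (exists i, (i < K)%nat /\ v i <> 0) ->
     (forall i, (i < K)%nat -> mulv K B v i = x * v i) -> x <= lam) ->
  forall t y, lam < t -> (forall i, (i < K)%nat -> 0 < y i) ->
     ~ (forall i, (i < K)%nat -> t * y i <= mulv K B y i).
Proof.
intros HK HB Hbound t y Ht Hy Hsup.
destruct (real_eigenvalue_above K B y t HK HB Hy Hsup) as [x [Hx Hroot]].
destruct (CharPoly.charpoly_root_eigenvector K B x Hroot) as [v [Hv Heig]].
specialize (Hbound x v Hv Heig). lra.
Qed.

Lemma perron_real_bound K B lam : perron_eigenvalue K B lam ->
  forall y v, (exists i, (i < K)%nat /\ v i <> 0) ->
  (forall i, (i < K)%nat -> mulv K B v i = y * v i) -> y <= lam.
Proof.
intros [_ Hmod] y v [i [Hi Hv]] He.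
assert (H : sqrt (y * y + 0 * 0) <= lam).
{ apply (Hmod y 0 v (fun _ => 0)); [exists i; auto|].
  intros j Hj. unfold mulv in He. split; [rewrite He by auto; ring|].
  rewrite (rsum_ext K _ (fun _ => 0)), rsum_zero by (intros; ring). ring. }
replace (y * y + 0 * 0) with (Rsqr y) in H by (unfold Rsqr; ring).
rewrite sqrt_Rsqr_abs in H. pose proof (Rle_abs y). lra.
Qed.

Lemma transpose_eigenvalue K B y v : (exists i, (i < K)%nat /\ v i <> 0) ->
  (forall i, (i < K)%nat -> mulv K (transpose B) v i = y * v i) ->
  exists u, (exists i, (i < K)%nat /\ u i <> 0) /\
            (forall i, (i < K)%nat -> mulv K B u i = y * u i).
Proof.
intros Hv He.
pose proof (CharPoly.eigenvector_charpoly_root K (transpose B) y v Hv He) as Hroot.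
unfold transpose in Hroot. rewrite CharPoly.charpoly_at_transpose in Hroot.
exact (CharPoly.charpoly_root_eigenvector K B y Hroot).
Qed.

Theorem perron_frobenius K B lam : (1 <= K)%nat -> nonneg_mx K B -> irreducible K B ->
  0 < lam -> perron_eigenvalue K B lam ->
  exists g h, (forall i, (i < K)%nat -> 0 < g i) /\ (forall i, (i < K)%nat -> 0 < h i) /\
    (forall k, (k < K)%nat -> rsum K (fun i => g i * B i k) = lam * g k) /\
    (forall i, (i < K)%nat -> mulv K B h i = lam * h i).
Proof.
intros HK HB Hirr Hlam Hperron.
pose proof (perron_real_bound K B lam Hperron) as Hbound.
destruct Hperron as [[x [[j0 [Hj0 Hxj0]] Hx]] _].
assert (HBt : nonneg_mx K (transpose B)) by (intros i j Hi Hj; apply HB; auto).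
destruct (positive_eigenvector K B lam (fun j => Rabs (x j)) j0) as [h [Hh HBh]]; auto.
{ now apply no_supersolution_above. }
{ intros. apply Rabs_pos. }
{ now apply Rabs_pos_lt. }
{ apply abs_supersolution; auto. lra. }
assert (Hroot : CharPoly.charpoly_at K (transpose B) lam = 0).
{ unfold transpose. rewrite CharPoly.charpoly_at_transpose.
  apply (CharPoly.eigenvector_charpoly_root K B lam x); eauto. }
destruct (CharPoly.charpoly_root_eigenvector K _ lam Hroot) as [v [[k0 [Hk0 Hvk0]] Hv]].
destruct (positive_eigenvector K (transpose B) lam (fun j => Rabs (v j)) k0) as [g [Hg HgB]];
  auto using irreducible_transpose.
{ apply no_supersolution_above; auto. intros y u Hu He.
  destruct (transpose_eigenvalue K B y u Hu He) as [u' [Hu' He']]. eauto. }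
{ intros. apply Rabs_pos. }
{ now apply Rabs_pos_lt. }
{ apply abs_supersolution; auto. lra. }
exists g, h. repeat split; auto.
intros k Hk. rewrite <- (HgB k Hk). apply rsum_ext. intros i Hi. unfold transpose. ring.
Qed.

(** * The variational formula *)

Lemma ln_le_mono x y : 0 < x -> x <= y -> ln x <= ln y.
Proof.
intros Hx [Hlt|Heq].
- now apply Rlt_le, ln_increasing.
- rewrite Heq. lra.
Qed.

Lemma ln_div x y : 0 < x -> 0 < y -> ln (x / y) = ln x - ln y.
Proof.
intros. unfold Rdiv. rewrite ln_mult, ln_Rinv; auto. now apply Rinv_0_lt_compat.
Qed.

Lemma ln_le_sub1 x : 0 < x -> ln x <= x - 1.
Proof. intros Hx. pose proof (exp_ineq1_le (ln x)). rewrite exp_ln in H by auto. lra. Qed.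

Lemma le_ln_of_shifts a s : 0 < s -> (forall eps, 0 < eps -> a <= ln (s + eps)) -> a <= ln s.
Proof.
intros Hs H. apply Rnot_lt_le. intros Hlt.
assert (Hexp : s < exp a) by (rewrite <- (exp_ln s) by auto; now apply exp_increasing).
specialize (H ((exp a - s) / 2) ltac:(lra)).
assert (ln (s + (exp a - s) / 2) < ln (exp a)) by (apply ln_increasing; lra).
rewrite ln_exp in H0. lra.
Qed.

(** Jensen's inequality for the logarithm, for weights [q] on the pair space;
    [b] only matters where [q > 0]. *)
Lemma jensen_ln K q b :
  (forall i j, (i < K)%nat -> (j < K)%nat -> 0 <= q i j) -> dsum K q = 1 ->
  (forall i j, (i < K)%nat -> (j < K)%nat -> 0 < q i j -> 0 < b i j) ->
  dsum K (fun i j => q i j * ln (b i j)) <= ln (dsum K (fun i j => q i j * b i j)).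
Proof.
intros Hq Hq1 Hb.
assert (Hqb : forall i j, (i < K)%nat -> (j < K)%nat -> 0 <= q i j * b i j).
{ intros i j Hi Hj. destruct (Rle_lt_or_eq_dec _ _ (Hq i j Hi Hj)) as [Hp|<-]; [|lra].
  apply Rlt_le, Rmult_lt_0_compat; auto. }
set (S := dsum K (fun i j => q i j * b i j)).
assert (HS : 0 < S).
{ destruct (dsum_pos_witness K q ltac:(lra)) as [i [j [Hi [Hj Hp]]]].
  apply (dsum_pos K _ i j); auto. apply Rmult_lt_0_compat; auto. }
assert (H : dsum K (fun i j => q i j * ln (b i j) - ln S * q i j)
            <= dsum K (fun i j => / S * (q i j * b i j) - q i j)).
{ apply dsum_le. intros i j Hi Hj.
  destruct (Rle_lt_or_eq_dec _ _ (Hq i j Hi Hj)) as [Hp|<-]; [|lra].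
  pose proof (Hb i j Hi Hj Hp).
  pose proof (ln_le_sub1 (b i j / S) ltac:(now apply Rdiv_lt_0_compat)).
  rewrite ln_div in H0 by auto.
  replace (q i j * ln (b i j) - ln S * q i j) with (q i j * (ln (b i j) - ln S)) by ring.
  replace (/ S * (q i j * b i j) - q i j) with (q i j * (b i j / S - 1)) by (field; lra).
  apply Rmult_le_compat_l; lra. }
rewrite !dsum_minus, !dsum_scal, Hq1 in H. fold S in H.
rewrite Rinv_l in H by lra. lra.
Qed.

(** Reproduction weight [mu_(k,l) = m_k(e1) m_l(e2)], so that
    [R(f) = sum_(k,l) f_(k,l) ln mu_(k,l)]. *)
Definition mu (m : nat -> env -> R) (k l : nat) : R := m k e1 * m l e2.

Definition ell (m : nat -> env -> R) (D : nat -> nat -> R) (g : nat -> R) (k l : nat) : R :=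
  mu m k l * D k l * g k.

(** If [I(f)] is finite, [f] is carried by the pairs [(k,l)] with [d_kl > 0]
    (test the condition on the constant vector [1]). *)
Lemma Ival_support K D f c k l : Ival K D f c -> (k < K)%nat -> (l < K)%nat ->
  0 < f k l -> D k l <> 0.
Proof.
intros [Hpos _] Hk Hl Hf HD0.
specialize (Hpos (fun _ _ => 1) ltac:(intros ? ? ? ?; lra) k l Hk Hl Hf).
unfold vB in Hpos. rewrite HD0 in Hpos.
rewrite (rsum_ext K _ (fun _ => 0)), rsum_zero in Hpos; [lra|].
intros i Hi. rewrite (rsum_ext K _ (fun _ => 0)); [apply rsum_zero|]. intros. ring.
Qed.

Section Variational.
Variables (K : nat) (D : nat -> nat -> R) (m : nat -> env -> R) (s : R) (g : nat -> R).
Hypothesis HK : (1 <= K)%nat.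
Hypothesis HD : stochastic K D.
Hypothesis Hm : forall i w, (i < K)%nat -> 0 < m i w.
Hypothesis Hs : 0 < s.
Hypothesis Hg : forall i, (i < K)%nat -> 0 < g i.
Hypothesis HgA : forall k, (k < K)%nat -> rsum K (fun i => g i * A2 K m D i k) = s * g k.

Lemma mu_pos k l : (k < K)%nat -> (l < K)%nat -> 0 < mu m k l.
Proof. intros. apply Rmult_lt_0_compat; auto. Qed.

Lemma ell_nonneg k l : (k < K)%nat -> (l < K)%nat -> 0 <= ell m D g k l.
Proof.
intros Hk Hl. pose proof (mu_pos k l Hk Hl). pose proof (proj1 HD k l Hk Hl).
pose proof (Hg k Hk). unfold ell. apply Rmult_le_pos; [apply Rmult_le_pos|]; lra.
Qed.

Lemma ell_pos k l : (k < K)%nat -> (l < K)%nat -> D k l <> 0 -> 0 < ell m D g k l.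
Proof.
intros Hk Hl HDkl. pose proof (mu_pos k l Hk Hl). pose proof (Hg k Hk).
assert (0 < D k l) by (destruct (Rle_lt_or_eq_dec _ _ (proj1 HD k l Hk Hl)); auto; congruence).
unfold ell. apply Rmult_lt_0_compat; [apply Rmult_lt_0_compat|]; auto.
Qed.

(** Left invariance: [sum_(i,j) ell_(i,j) d_jk = s g_k], i.e. [g A2 = s g]. *)
Lemma ell_left_invariant k : (k < K)%nat ->
  dsum K (fun i j => ell m D g i j * D j k) = s * g k.
Proof.
intros Hk. rewrite <- HgA by auto. unfold dsum, A2. apply rsum_ext. intros i Hi.
rewrite <- rsum_scal_l. apply rsum_ext. intros j Hj. unfold ell, mu. ring.
Qed.

(** Test [I(f)] on [v = ell + del]: then
    [(vB)_(k,l) = d_kl (s g_k + del colmass_k)] with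
    [colmass_k = sum_(i,j) d_jk], so [v/(vB) >= mu/(s + del N)] on the support
    of [f], whence [R(f) - ln (s + del N) <= I(f)]; let [del] go to [0]. *)

Definition colmass (k : nat) : R := dsum K (fun i j => D j k).

(** [vB] of the shifted weights, by left invariance of [ell]. *)
Lemma vB_shifted_ell del k l : (k < K)%nat ->
  vB K D (fun i j => ell m D g i j + del) k l = D k l * (s * g k + del * colmass k).
Proof.
intros Hk. change (vB K D ?v k l) with (dsum K (fun i j => v i j * (D j k * D k l))).
rewrite (dsum_ext K _ (fun i j => D k l * (ell m D g i j * D j k) + (D k l * del) * D j k))
  by (intros; ring).
rewrite dsum_plus, !dsum_scal, ell_left_invariant by auto. unfold colmass. ring.
Qed.

Lemma shifted_ratio_bound del N k l : 0 < del -> (k < K)%nat -> (l < K)%nat ->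
  D k l <> 0 -> colmass k <= N * g k ->
  mu m k l / (s + del * N) <=
  (ell m D g k l + del) / vB K D (fun i j => ell m D g i j + del) k l.
Proof.
intros Hdel Hk Hl HDkl HW.
rewrite vB_shifted_ell by auto.
pose proof (mu_pos k l Hk Hl). pose proof (Hg k Hk).
assert (HDp : 0 < D k l) by (destruct (Rle_lt_or_eq_dec _ _ (proj1 HD k l Hk Hl)); auto; congruence).
assert (HW0 : 0 <= colmass k) by (apply dsum_nonneg; intros; apply (proj1 HD); auto).
assert (HN : 0 <= N) by (apply (Rmult_le_reg_r (g k)); nra).
assert (Hden : 0 < D k l * (s * g k + del * colmass k)) by (apply Rmult_lt_0_compat; nra).
unfold Rdiv. apply (Rmult_le_reg_r (D k l * (s * g k + del * colmass k) * (s + del * N))).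
{ apply Rmult_lt_0_compat; nra. }
replace (mu m k l * / (s + del * N) * (D k l * (s * g k + del * colmass k) * (s + del * N)))
  with (mu m k l * D k l * (s * g k + del * colmass k)) by (field; nra).
replace ((ell m D g k l + del) * / (D k l * (s * g k + del * colmass k))
          * (D k l * (s * g k + del * colmass k) * (s + del * N)))
  with ((ell m D g k l + del) * (s + del * N)) by (field; nra).
unfold ell.
assert (Hcol : s * g k + del * colmass k <= g k * (s + del * N)) by nra.
assert (0 <= mu m k l * D k l) by (apply Rmult_le_pos; lra).
apply (Rmult_le_compat_l (mu m k l * D k l)) in Hcol; [|lra].
assert (0 <= del * (s + del * N)) by nra.
nra.
Qed.

Lemma colmass_dominated : exists N, 0 <= N /\ forall k, (k < K)%nat -> colmass k <= N * g k.
Proof.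
assert (Hratio : forall k, (k < K)%nat -> 0 <= colmass k / g k).
{ intros k Hk. apply Rmult_le_pos; [apply dsum_nonneg; intros; apply (proj1 HD); auto|].
  apply Rlt_le, Rinv_0_lt_compat; auto. }
exists (rsum K (fun k => colmass k / g k)). split; [now apply rsum_nonneg|].
intros k Hk. pose proof (Hg k Hk).
pose proof (rsum_ge_term K (fun k => colmass k / g k) k Hratio Hk) as Hle.
apply (Rmult_le_compat_r (g k)) in Hle; [|lra].
replace (colmass k / g k * g k) with (colmass k) in Hle by (field; lra). lra.
Qed.

Lemma J_shifted_ell_lower f del N : in_FE K f ->
  (forall k l, (k < K)%nat -> (l < K)%nat -> 0 < f k l -> D k l <> 0) ->
  0 < del -> 0 <= N -> (forall k, (k < K)%nat -> colmass k <= N * g k) ->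
  Rfun K m f - ln (s + del * N) <= Jfun K D f (fun i j => ell m D g i j + del).
Proof.
intros [Hf0 Hf1] Hsupp Hdel HN0 HN.
set (v := fun i j => ell m D g i j + del).
change (Rfun K m f) with (dsum K (fun k l => f k l * ln (mu m k l))).
change (Jfun K D f v) with (dsum K (fun k l => f k l * ln (v k l / vB K D v k l))).
replace (ln (s + del * N)) with (ln (s + del * N) * dsum K f)
  by (change (dsum K f) with (rsum K (fun i => rsum K (fun j => f i j))); rewrite Hf1; ring).
rewrite <- dsum_scal, <- dsum_minus. apply dsum_le. intros k l Hk Hl.
destruct (Rle_lt_or_eq_dec _ _ (Hf0 k l Hk Hl)) as [Hfp|<-]; [|lra].
assert (Hratio : ln (mu m k l) - ln (s + del * N) <= ln (v k l / vB K D v k l)).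
{ rewrite <- ln_div by (try apply mu_pos; auto; nra).
  apply ln_le_mono; [apply Rdiv_lt_0_compat; [apply mu_pos|]; auto; nra|].
  apply shifted_ratio_bound; auto. }
replace (f k l * ln (mu m k l) - ln (s + del * N) * f k l)
  with (f k l * (ln (mu m k l) - ln (s + del * N))) by ring.
apply Rmult_le_compat_l; lra.
Qed.

Lemma rate_upper_bound f b : in_FE K f ->
  (forall k l, (k < K)%nat -> (l < K)%nat -> 0 < f k l -> D k l <> 0) ->
  (forall v, vpos K v -> Jfun K D f v <= b) -> Rfun K m f - ln s <= b.
Proof.
intros Hf Hsupp Hb.
destruct colmass_dominated as [N [HN0 HN]].
enough (Rfun K m f - b <= ln s) by lra.
apply le_ln_of_shifts; auto. intros eps Heps.
set (del := eps / (N + 1)).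
assert (Hdel : 0 < del) by (apply Rdiv_lt_0_compat; lra).
assert (HdelN : del * N <= eps).
{ unfold del. apply (Rmult_le_reg_r (N + 1)); [lra|].
  replace (eps / (N + 1) * N * (N + 1)) with (eps * N) by (field; lra). nra. }
pose proof (J_shifted_ell_lower f del N Hf Hsupp Hdel HN0 HN).
assert (Hv : vpos K (fun i j => ell m D g i j + del)).
{ intros i j Hi Hj. pose proof (ell_nonneg i j Hi Hj). lra. }
pose proof (Hb _ Hv).
assert (ln (s + del * N) <= ln (s + eps)) by (apply ln_le_mono; nra).
lra.
Qed.

Lemma Ival_upper_bound f c : in_FE K f -> Ival K D f c -> Rfun K m f - c <= ln s.
Proof.
intros Hf Hc.
enough (Rfun K m f - ln s <= c) by lra.
apply rate_upper_bound; auto.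
- intros k l Hk Hl Hfp. exact (Ival_support K D f c k l Hc Hk Hl Hfp).
- intros v Hv. apply (proj1 (proj2 Hc)). now exists v.
Qed.

(** With also a positive right eigenvector [h] of [A2], the optimal
    distribution is [fstar_(k,l) = ell_(k,l) (D h)_l / Z].  It is the stationary
    law of the reversed chain with kernel
    [Q^(k,l)_(i,j) = ell_(i,j) d_jk d_kl mu_(k,l) / (s ell_(k,l))]; the
    "flow" [fstar_(k,l) Q^(k,l)_(i,j)] has marginals [fstar] on both sides.  Jensen's
    inequality for each [Q^(k,l)], summed against [fstar], gives
    [J(fstar, v) <= R(fstar) - ln s] for every positive [v]. *)

Variable h : nat -> R.
Hypothesis Hh : forall i, (i < K)%nat -> 0 < h i.
Hypothesis HAh : forall i, (i < K)%nat -> mulv K (A2 K m D) h i = s * h i.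

(** Normalization, optimal distribution, and flow
    [flow_(k,l),(i,j) = fstar_(k,l) Q^(k,l)_(i,j)]. *)
Definition Zstar : R := dsum K (fun k l => ell m D g k l * mulv K D h l).

Definition fstar (k l : nat) : R := ell m D g k l * mulv K D h l / Zstar.

Definition flow (k l i j : nat) : R :=
  ell m D g i j * D j k * D k l * mu m k l * mulv K D h l / (s * Zstar).

(** [(D h)_l > 0], since rows of [D] sum to [1] and [h > 0]. *)
Lemma Dh_pos l : (l < K)%nat -> 0 < mulv K D h l.
Proof.
intros Hl. destruct (rsum_pos_witness K (fun j => D l j)) as [t [Ht Hp]].
{ rewrite (proj2 HD l Hl). lra. }
apply (rsum_pos K _ t); auto.
- intros j Hj. apply Rmult_le_pos; [apply (proj1 HD)|apply Rlt_le]; auto.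
- now apply Rmult_lt_0_compat, Hh.
Qed.

(** [Z > 0]: some [d_0l] is positive. *)
Lemma Zstar_pos : 0 < Zstar.
Proof.
destruct (rsum_pos_witness K (fun j => D 0%nat j)) as [l [Hl Hp]].
{ rewrite (proj2 HD 0%nat ltac:(lia)). lra. }
apply (dsum_pos K _ 0%nat l); try lia.
- intros i j Hi Hj. apply Rmult_le_pos; [apply ell_nonneg|apply Rlt_le, Dh_pos]; auto.
- apply Rmult_lt_0_compat; [apply ell_pos|apply Dh_pos]; auto; lia || lra.
Qed.

Lemma fstar_nonneg k l : (k < K)%nat -> (l < K)%nat -> 0 <= fstar k l.
Proof.
intros Hk Hl. unfold fstar. apply Rmult_le_pos; [apply Rmult_le_pos|].
- now apply ell_nonneg.
- now apply Rlt_le, Dh_pos.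
- apply Rlt_le, Rinv_0_lt_compat, Zstar_pos.
Qed.

Lemma fstar_in_FE : in_FE K fstar.
Proof.
split; [exact fstar_nonneg|].
change (dsum K fstar = 1). unfold fstar.
rewrite (dsum_ext K _ (fun k l => / Zstar * (ell m D g k l * mulv K D h l)))
  by (intros; unfold Rdiv; ring).
rewrite dsum_scal. fold Zstar. pose proof Zstar_pos. field. lra.
Qed.

Lemma fstar_support k l : (k < K)%nat -> (l < K)%nat -> 0 < fstar k l -> 0 < D k l.
Proof.
intros Hk Hl Hf. destruct (Rle_lt_or_eq_dec _ _ (proj1 HD k l Hk Hl)) as [Hp|E]; auto.
exfalso. unfold fstar, ell in Hf. rewrite <- E in Hf. lra.
Qed.

Lemma Dh_right_invariant k : (k < K)%nat ->
  rsum K (fun l => mu m k l * D k l * mulv K D h l) = s * h k.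
Proof.
intros Hk. rewrite <- HAh by auto. unfold mulv, A2.
rewrite (rsum_ext K _ (fun l => rsum K (fun t => m k e1 * D k l * m l e2 * D l t * h t))).
- rewrite rsum_swap. apply rsum_ext. intros t Ht. now rewrite <- rsum_scal_r.
- intros l Hl. rewrite <- rsum_scal_l. apply rsum_ext. intros. unfold mu. ring.
Qed.

Lemma flow_out k l : (k < K)%nat -> (l < K)%nat -> dsum K (flow k l) = fstar k l.
Proof.
intros Hk Hl. unfold flow, fstar.
rewrite (dsum_ext K _ (fun i j => D k l * mu m k l * mulv K D h l / (s * Zstar)
                                  * (ell m D g i j * D j k))) by (intros; unfold Rdiv; ring).
rewrite dsum_scal, ell_left_invariant by auto.
unfold ell. pose proof Zstar_pos. field. lra.
Qed.

Lemma flow_in i j : (i < K)%nat -> (j < K)%nat -> dsum K (fun k l => flow k l i j) = fstar i j.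
Proof.
intros Hi Hj. unfold flow, fstar.
rewrite (dsum_ext K _ (fun k l => ell m D g i j / (s * Zstar)
                                  * (D j k * (mu m k l * D k l * mulv K D h l))))
  by (intros; unfold Rdiv; ring).
rewrite dsum_scal. unfold dsum.
rewrite (rsum_ext K _ (fun k => D j k * (s * h k))).
- rewrite (rsum_ext K _ (fun k => s * (D j k * h k))) by (intros; ring).
  rewrite rsum_scal_l. fold (mulv K D h j). pose proof Zstar_pos. field. lra.
- intros k Hk. rewrite rsum_scal_l, Dh_right_invariant by auto. reflexivity.
Qed.

Lemma fstar_vB_pos v k l : vpos K v -> (k < K)%nat -> (l < K)%nat ->
  0 < fstar k l -> 0 < vB K D v k l.
Proof.
intros Hv Hk Hl Hf. pose proof (fstar_support k l Hk Hl Hf) as HDkl.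
destruct (dsum_pos_witness K (fun i j => ell m D g i j * D j k)) as [i [j [Hi [Hj Hp]]]].
{ rewrite ell_left_invariant by auto. apply Rmult_lt_0_compat; auto. }
assert (0 < D j k).
{ pose proof (ell_nonneg i j Hi Hj). pose proof (proj1 HD j k Hj Hk).
  apply Rnot_le_lt. intros. nra. }
apply (dsum_pos K _ i j); auto.
- intros i' j' Hi' Hj'. apply Rmult_le_pos; [apply Rlt_le, Hv; auto|].
  apply Rmult_le_pos; apply (proj1 HD); auto.
- apply Rmult_lt_0_compat; [apply Hv; auto|]. now apply Rmult_lt_0_compat.
Qed.

Lemma flow_nonneg k l i j : (k < K)%nat -> (l < K)%nat -> (i < K)%nat -> (j < K)%nat ->
  0 <= flow k l i j.
Proof.
intros Hk Hl Hi Hj. unfold flow.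
pose proof (ell_nonneg i j Hi Hj). pose proof (proj1 HD j k Hj Hk). pose proof (proj1 HD k l Hk Hl).
pose proof (mu_pos k l Hk Hl). pose proof (Dh_pos l Hl). pose proof Zstar_pos.
apply Rmult_le_pos; [|apply Rlt_le, Rinv_0_lt_compat, Rmult_lt_0_compat; auto].
apply Rmult_le_pos; [apply Rmult_le_pos; [apply Rmult_le_pos; [apply Rmult_le_pos|]|]|]; lra.
Qed.

Lemma flow_ratio_sum v k l : vpos K v -> (k < K)%nat -> (l < K)%nat -> 0 < fstar k l ->
  dsum K (fun i j => flow k l i j * (v i j / ell m D g i j))
  <= fstar k l * (mu m k l / (s * ell m D g k l) * vB K D v k l).
Proof.
intros Hv Hk Hl Hf.
pose proof Zstar_pos. pose proof (Dh_pos l Hl). pose proof (mu_pos k l Hk Hl).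
assert (Hell : 0 < ell m D g k l) by (apply ell_pos; auto; pose proof (fstar_support k l Hk Hl Hf); lra).
change (vB K D v k l) with (dsum K (fun i j => v i j * (D j k * D k l))).
rewrite <- !dsum_scal. apply dsum_le. intros i j Hi Hj.
destruct (Rle_lt_or_eq_dec _ _ (ell_nonneg i j Hi Hj)) as [Hp|E].
- right. unfold flow, fstar. field. repeat split; lra.
- unfold flow. rewrite <- E. unfold Rdiv. rewrite !Rmult_0_l.
  pose proof (Hv i j Hi Hj). pose proof (proj1 HD j k Hj Hk). pose proof (proj1 HD k l Hk Hl).
  apply Rmult_le_pos; [lra|]. apply Rmult_le_pos; [apply Rmult_le_pos|]; [lra| |].
  + apply Rlt_le, Rinv_0_lt_compat, Rmult_lt_0_compat; auto.
  + apply Rmult_le_pos; [lra|]. now apply Rmult_le_pos.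
Qed.

Lemma kernel_jensen v k l : vpos K v -> (k < K)%nat -> (l < K)%nat -> 0 < fstar k l ->
  dsum K (fun i j => flow k l i j / fstar k l * ln (v i j / ell m D g i j))
  <= ln (mu m k l) + ln (vB K D v k l) - ln s - ln (ell m D g k l).
Proof.
intros Hv Hk Hl Hf.
pose proof (mu_pos k l Hk Hl). pose proof (fstar_vB_pos v k l Hv Hk Hl Hf).
assert (Hell : 0 < ell m D g k l) by (apply ell_pos; auto; pose proof (fstar_support k l Hk Hl Hf); lra).
set (q := fun i j => flow k l i j / fstar k l).
set (b := fun i j => v i j / ell m D g i j).
assert (Hq : forall i j, (i < K)%nat -> (j < K)%nat -> 0 <= q i j).
{ intros i j Hi Hj. apply Rmult_le_pos; [now apply flow_nonneg|apply Rlt_le, Rinv_0_lt_compat; auto]. }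
assert (Hq1 : dsum K q = 1).
{ unfold q. rewrite (dsum_ext K _ (fun i j => / fstar k l * flow k l i j)) by (intros; unfold Rdiv; ring).
  rewrite dsum_scal, flow_out by auto. field. lra. }
assert (Hb : forall i j, (i < K)%nat -> (j < K)%nat -> 0 < q i j -> 0 < b i j).
{ intros i j Hi Hj Hqp. apply Rdiv_lt_0_compat; [apply Hv; auto|].
  destruct (Rle_lt_or_eq_dec _ _ (ell_nonneg i j Hi Hj)) as [Hp|E]; auto.
  unfold q, flow in Hqp. rewrite <- E in Hqp. unfold Rdiv in Hqp. lra. }
assert (Hqb : dsum K (fun i j => q i j * b i j) <= mu m k l / (s * ell m D g k l) * vB K D v k l).
{ apply (Rmult_le_reg_l (fstar k l)); auto.
  rewrite <- dsum_scal. eapply Rle_trans; [|exact (flow_ratio_sum v k l Hv Hk Hl Hf)].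
  right. apply dsum_ext. intros i j _ _. unfold q.
  change (v i j / ell m D g i j) with (b i j). field. lra. }
assert (Hqb_pos : 0 < dsum K (fun i j => q i j * b i j)).
{ destruct (dsum_pos_witness K q ltac:(lra)) as [i [j [Hi [Hj Hp]]]].
  apply (dsum_pos K _ i j); auto.
  - intros i' j' Hi' Hj'. destruct (Rle_lt_or_eq_dec _ _ (Hq i' j' Hi' Hj')) as [Hp'|<-]; [|lra].
    apply Rlt_le, Rmult_lt_0_compat; auto.
  - apply Rmult_lt_0_compat; auto. }
eapply Rle_trans; [exact (jensen_ln K q b Hq Hq1 Hb)|].
eapply Rle_trans; [exact (ln_le_mono _ _ Hqb_pos Hqb)|].
rewrite ln_mult, ln_div, ln_mult; try lra; try apply Rdiv_lt_0_compat; try apply Rmult_lt_0_compat; auto.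
Qed.

Lemma pair_bound v k l : vpos K v -> (k < K)%nat -> (l < K)%nat ->
  fstar k l * ln (v k l / vB K D v k l) <=
  fstar k l * (ln (mu m k l) - ln s + ln (v k l / ell m D g k l))
  - dsum K (fun i j => flow k l i j * ln (v i j / ell m D g i j)).
Proof.
intros Hv Hk Hl.
destruct (Rle_lt_or_eq_dec _ _ (fstar_nonneg k l Hk Hl)) as [Hf|Hf0].
- assert (Hell : 0 < ell m D g k l)
    by (apply ell_pos; auto; pose proof (fstar_support k l Hk Hl Hf); lra).
  pose proof (kernel_jensen v k l Hv Hk Hl Hf) as HJ.
  rewrite (dsum_ext K (fun i j => flow k l i j * _)
             (fun i j => fstar k l * (flow k l i j / fstar k l * ln (v i j / ell m D g i j))))
    by (intros; field; lra).
  rewrite dsum_scal, !ln_div by (auto; now apply fstar_vB_pos).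
  replace (fstar k l * (ln (mu m k l) - ln s + (ln (v k l) - ln (ell m D g k l)))
           - fstar k l * dsum K (fun i j => flow k l i j / fstar k l * ln (v i j / ell m D g i j)))
    with (fstar k l * (ln (mu m k l) - ln s + (ln (v k l) - ln (ell m D g k l))
           - dsum K (fun i j => flow k l i j / fstar k l * ln (v i j / ell m D g i j)))) by ring.
  apply Rmult_le_compat_l; lra.
- (* [fstar_(k,l) = 0] forces [d_kl = 0], hence no flow out of [(k,l)] *)
  assert (HD0 : D k l = 0).
  { apply NNPP. intros Hne. pose proof (ell_pos k l Hk Hl Hne). pose proof (Dh_pos l Hl).
    pose proof Zstar_pos. assert (0 < fstar k l); [|lra].
    unfold fstar. apply Rdiv_lt_0_compat; [apply Rmult_lt_0_compat|]; auto. }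
  rewrite <- Hf0, (dsum_ext K _ (fun _ _ => 0)), dsum_zero; [lra|].
  intros i j Hi Hj. unfold flow. rewrite HD0. unfold Rdiv. ring.
Qed.

(** Summing [pair_bound] against [fstar]: the [L] terms cancel by the
    incoming-marginal identity [flow_in], leaving [J(fstar, v) <= R(fstar) - ln s]. *)
Lemma fstar_J_bound v : vpos K v -> Jfun K D fstar v <= Rfun K m fstar - ln s.
Proof.
intros Hv.
set (L := fun i j => ln (v i j / ell m D g i j)).
change (Jfun K D fstar v) with (dsum K (fun k l => fstar k l * ln (v k l / vB K D v k l))).
change (Rfun K m fstar) with (dsum K (fun k l => fstar k l * ln (mu m k l))).
eapply Rle_trans; [apply dsum_le; intros k l Hk Hl; exact (pair_bound v k l Hv Hk Hl)|].
fold L.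
assert (Hswap : dsum K (fun k l => dsum K (fun i j => flow k l i j * L i j))
                = dsum K (fun i j => fstar i j * L i j)).
{ rewrite (dsum_swap K (fun k l i j => flow k l i j * L i j)). apply dsum_ext. intros i j Hi Hj.
  rewrite <- flow_in by auto.
  rewrite (dsum_ext K _ (fun k l => L i j * flow k l i j)) by (intros; ring).
  rewrite dsum_scal. ring. }
rewrite (dsum_ext K _ (fun k l => (fstar k l * ln (mu m k l) - ln s * fstar k l + fstar k l * L k l)
                                  - dsum K (fun i j => flow k l i j * L i j)))
  by (intros; unfold L; ring).
rewrite dsum_minus, !dsum_plus, dsum_minus, dsum_scal, Hswap.
change (dsum K fstar) with (rsum K (fun i => rsum K (fun j => fstar i j))).
rewrite (proj2 fstar_in_FE). lra.
Qed.

Lemma fstar_Ival : Ival K D fstar (Rfun K m fstar - ln s).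
Proof.
split; [|split].
- intros v Hv k l Hk Hl Hf. now apply fstar_vB_pos.
- intros y [v [Hv ->]]. now apply fstar_J_bound.
- intros b Hb. apply rate_upper_bound.
  + exact fstar_in_FE.
  + intros k l Hk Hl Hf. pose proof (fstar_support k l Hk Hl Hf). lra.
  + intros v Hv. apply Hb. now exists v.
Qed.

End Variational.

Theorem theorem5p3 (K : nat) (D : nat -> nat -> R)
  (p : nat -> env -> nat -> R) (m : nat -> env -> R) (rho : R) :
  (1 <= K)%nat ->
  stochastic K D ->
  (forall i w n, (i < K)%nat -> 0 <= p i w n) ->
  (forall i w, (i < K)%nat -> infinite_sum (p i w) 1) ->
  (forall i w, (i < K)%nat ->
     infinite_sum (fun n => INR n * p i w n) (m i w)) ->
  (forall i w, (i < K)%nat ->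
     exists s, infinite_sum (fun n => INR n * logp (INR n) * p i w n) s) ->
  (forall i w, (i < K)%nat -> 0 < m i w) ->
  irreducible K D ->
  aperiodic K D ->
  0 < rho ->
  perron_eigenvalue K (A2 K m D) (rho ^ 2) ->
  (exists f c, in_FE K f /\ Ival K D f c /\ Rfun K m f - c = 2 * ln rho) /\
  (forall f c, in_FE K f -> Ival K D f c -> Rfun K m f - c <= 2 * ln rho).
Proof.
intros HK HD _ _ _ _ Hm Hirr Hap Hrho Hperron.
assert (Hs : 0 < rho ^ 2) by now apply pow_lt.
assert (Hln : ln (rho ^ 2) = 2 * ln rho) by (rewrite ln_pow by auto; simpl; ring).
destruct (perron_frobenius K (A2 K m D) (rho ^ 2) HK (A2_nonneg K m D HD Hm)
            (A2_irreducible K m D HD Hm Hirr Hap) Hs Hperron)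
  as [g [h [Hg [Hh [HgA HAh]]]]].
rewrite <- Hln. split.
- exists (fstar K D m g h), (Rfun K m (fstar K D m g h) - ln (rho ^ 2)).
  split; [now apply fstar_in_FE|]. split; [now apply (fstar_Ival K D m (rho ^ 2) g)|]. ring.
- intros f c Hf Hc. now apply (Ival_upper_bound K D m (rho ^ 2) g).
Qed.
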